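(* Let $\mathcal K$ be a 2-category which admits Eilenberg–Moore constructions for monads and in which idempotent 2-cells split, with $J^w$ as in the context. Let $(V,\psi),(W,\phi):(t,\mu,\eta)\to(t',\mu',\eta')$ be 1-cells of $\mathrm{EM}^w(\mathcal K)$ and $\omega:V\Rightarrow W$ a 2-cell of $\mathcal K$; let $(\iota,\pi)$ denote the chosen splittings used to construct $J^w(V,\psi)$ and $J^w(W,\phi)$, so that $(J^w(V,\psi),\iota,\pi)$ and $(J^w(W,\phi),\iota,\pi)$ are weak liftings of $V$ and $W$ for $t,t'$. (1) The following are equivalent: (i) $\omega t\ast\psi=W\mu\ast\phi t\ast t'\omega t\ast t'\psi\ast t'\eta'V$; (ii) $\omega t\ast\psi\ast\eta'V$ is a 2-cell $(V,\psi)\Rightarrow(W,\phi)$ in $\mathrm{EM}^w(\mathcal K)$; (iii) $\pi\ast\omega v\ast\iota$ is a morphism of $t'$-algebras $(v'J^w(V,\psi),v'\epsilon'J^w(V,\psi))\to(v'J^w(W,\phi),v'\epsilon'J^w(W,\phi))$ (i.e. a 2-cell between these 1-cells $IJ(t)\to t'$ of $\mathrm{EM}(\mathcal K)$) and $\iota\ast\pi\ast\omega v\ast\iota=\omega v\ast\iota$; (iv) $\omega$ has a weak $\iota$-lifting $J^w(V,\psi)\Rightarrow J^w(W,\phi)$. If these hold, then $v'J^w(\omega t\ast\psi\ast\eta'V)=\pi\ast\omega v\ast\iota$, i.e. the weak $\iota$-lifting of $\omega$ is $J^w(\omega t\ast\psi\ast\eta'V)$. (2) The following are equivalent: (i) $\phi\ast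 t'\omega=W\mu\ast\phi t\ast\eta'Wt\ast\omega t\ast\psi$; (ii) $\phi\ast\eta'W\ast\omega$ is a 2-cell $(V,\psi)\Rightarrow(W,\phi)$ in $\mathrm{EM}^w(\mathcal K)$; (iii) $\pi\ast\omega v\ast\iota$ is a morphism of $t'$-algebras as in (1)(iii) and $\pi\ast\omega v\ast\iota\ast\pi=\pi\ast\omega v$; (iv) $\omega$ has a weak $\pi$-lifting $J^w(V,\psi)\Rightarrow J^w(W,\phi)$. If these hold, then $v'J^w(\phi\ast\eta'W\ast\omega)=\pi\ast\omega v\ast\iota$, i.e. the weak $\pi$-lifting of $\omega$ is $J^w(\phi\ast\eta'W\ast\omega)$. (3) The following are equivalent: (i) $\phi\ast t'\omega=\omega t\ast\psi$; (ii) $\phi\ast\eta'W\ast\omega$ and $\omega t\ast\psi\ast\eta'V$ are both 2-cells $(V,\psi)\Rightarrow(W,\phi)$ in $\mathrm{EM}^w(\mathcal K)$ (and then they are equal); (iii) $\pi\ast\omega v\ast\iota$ is a morphism of $t'$-algebras as in (1)(iii) and $\iota\ast\pi\ast\omega v=\omega v\ast\iota\ast\pi$; (iv) $\omega$ has both a weak $\iota$-lifting and a weak $\pi$-lifting $J^w(V,\psi)\Rightarrow J^w(W,\phi)$ (and then they are equal).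
   Context: Conventions in a 2-category $\mathcal K$: horizontal composition and whiskering by juxtaposition in the order of functor composition; identity 1-cell of $k$ written $k$, identity 2-cell of $V$ written $V$; vertical composition $\ast$ with $\alpha\ast\beta$ meaning $\beta$ then $\alpha$. Monads $(t,\mu,\eta)$ on $k$ are associative and unital. $\mathrm{EM}^w(\mathcal K)$: 1-cells $(V,\psi):(t,\mu,\eta)\to(t',\mu',\eta')$ with $V:k\to k'$, $\psi:t'V\Rightarrow Vt$, $V\mu\ast\psi t\ast t'\psi=\psi\ast\mu'V$; 2-cells $(V,\psi)\Rightarrow(W,\phi)$ are $\varrho:V\Rightarrow Wt$ with $W\mu\ast\varrho t\ast\psi=W\mu\ast\phi t\ast t'\varrho$ and $\varrho=W\mu\ast\phi t\ast\eta'Wt\ast\varrho$; vertical composite $\tau\bullet\varrho=U\mu\ast\tau t\ast\varrho$, identity 2-cell on $(W,\phi)$ is $\phi\ast\eta'W$ (these form a 2-category, with the Lack–Street $\mathrm{EM}(\mathcal K)$ as sub-2-category of 1-cells with $\psi\ast\eta'V=V\eta$). $\mathcal K$ admits Eilenberg–Moore constructions for monads: the inclusion $I:\mathcal K\to\mathrm{EM}(\mathcal K)$ has a right 2-adjoint $J$; each monad $(t,\mu,\eta)$ gives an adjunction $f\dashv v$, $f:k\to J(t)$, $v:J(t)\to k$, unit $\eta$, counit $\epsilon:fv\Rightarrow J(t)$, $t=vf$, $\mu=v\epsilon f$ (for $t'$: $f',v',\eta',\epsilon'$); $X\mapsto(vX,v\epsilon X)$, $\omega\mapsto v\omega$ is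 an isomorphism from $\mathcal K(l,J(t))$ to the category of $t$-algebras $(A:l\to k,\alpha:tA\Rightarrow A)$ with morphisms $\rho$ satisfying $\beta\ast t\rho=\rho\ast\alpha$. Idempotent 2-cells split. $J^w$: for each 1-cell $(V,\psi)$ of $\mathrm{EM}^w(\mathcal K)$ a splitting $Vv\overset{\pi}{\Rightarrow}\widetilde V\overset{\iota}{\Rightarrow}Vv$ of the idempotent $Vv\epsilon\ast\psi v\ast\eta'Vv$ is fixed; $J^w(t)=J(t)$; $J^w(V,\psi):J(t)\to J(t')$ is the unique 1-cell with $v'J^w(V,\psi)=\widetilde V$ and $v'\epsilon'J^w(V,\psi)=\pi\ast Vv\epsilon\ast\psi v\ast t'\iota$; for a 2-cell $\varrho:(V,\psi)\Rightarrow(W,\phi)$, $J^w(\varrho)$ is the unique 2-cell with $v'J^w(\varrho)=\pi\ast Wv\epsilon\ast\varrho v\ast\iota$. Weak liftings: a weak lifting of a 1-cell $V:k\to k'$ for monads $t$ (on $k$) and $t'$ (on $k'$) is a 1-cell $\overline V:J(t)\to J(t')$ together with a 2-cell $\iota:v'\overline V\Rightarrow Vv$ and a retraction $\pi:Vv\Rightarrow v'\overline V$ ($\pi\ast\iota$ identity). Given weak liftings $(\overline V,\iota,\pi)$ of $V$ and $(\overline W,\iota,\pi)$ of $W$, a weak $\iota$-lifting of $\omega:V\Rightarrow W$ is a 2-cell $\omega^\iota:\overline V\Rightarrow\overline W$ with $\iota\ast v'\omega^\iota=\omega v\ast\iota$; a weak $\pi$-lifting is $\omega^\pi:\overline V\Rightarrow\overline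 W$ with $v'\omega^\pi\ast\pi=\pi\ast\omega v$. *)

(* comp1 G F is the composite "G F" (functor order: first F, then G).  *)
(* vcomp α β = α ∗ β means "β then α".                                  *)
Record TwoCatData := {
  Ob :> Type;
  Hom : Ob -> Ob -> Type;
  Cell : forall a b : Ob, Hom a b -> Hom a b -> Type;
  id1 : forall a : Ob, Hom a a;
  comp1 : forall a b c : Ob, Hom b c -> Hom a b -> Hom a c;
  id2 : forall (a b : Ob) (F : Hom a b), Cell a b F F;
  vcomp : forall (a b : Ob) (F G H : Hom a b),
      Cell a b G H -> Cell a b F G -> Cell a b F H;
  whl : forall (a b c : Ob) (G : Hom b c) (F F' : Hom a b),
      Cell a b F F' -> Cell a c (comp1 a b c G F) (comp1 a b c G F');
  whr : forall (a b c : Ob) (G G' : Hom b c) (F : Hom a b),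
      Cell b c G G' -> Cell a c (comp1 a b c G F) (comp1 a b c G' F)
}.

Set Implicit Arguments.
Unset Strict Implicit.

Arguments Hom {K} a b : rename.
Arguments Cell {K a b} F G : rename.
Arguments id1 {K} a : rename.
Arguments comp1 {K a b c} G F : rename.
Arguments id2 {K a b} F : rename.
Arguments vcomp {K a b F G H} α β : rename.
Arguments whl {K a b c} G {F F'} α : rename.
Arguments whr {K a b c G G'} F α : rename.

Notation "G ⊙ F" := (comp1 G F) (at level 25, left associativity).
Notation "α ∗ β" := (vcomp α β) (at level 41, right associativity).
Notation "G ◁ α" := (whl G α) (at level 31, right associativity).
Notation "α ▷ F" := (whr F α) (at level 28, left associativity).

Definition eqcell {K : TwoCatData} {a b : K} {F G : Hom a b} (e : F = G)
  : Cell F G :=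
  match e in _ = G' return Cell F G' with eq_refl => id2 F end.

Record TwoCatLaws1 (K : TwoCatData) : Prop := {
  l_assoc : forall (a b c d : K) (h : Hom c d) (g : Hom b c) (f : Hom a b),
      h ⊙ (g ⊙ f) = (h ⊙ g) ⊙ f;
  l_idl : forall (a b : K) (f : Hom a b), id1 b ⊙ f = f;
  l_idr : forall (a b : K) (f : Hom a b), f ⊙ id1 a = f
}.

Arguments l_assoc {K} L {a b c d} h g f : rename.
Arguments l_idl {K} L {a b} f : rename.
Arguments l_idr {K} L {a b} f : rename.

Record TwoCatLaws2 (K : TwoCatData) (L : TwoCatLaws1 K) : Prop := {
  l_vassoc : forall (a b : K) (F G H I : Hom a b)
      (α : Cell H I) (β : Cell G H) (γ : Cell F G),
      α ∗ (β ∗ γ) = (α ∗ β) ∗ γ;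
  l_vidl : forall (a b : K) (F G : Hom a b) (α : Cell F G), id2 G ∗ α = α;
  l_vidr : forall (a b : K) (F G : Hom a b) (α : Cell F G), α ∗ id2 F = α;
  l_whl_vcomp : forall (a b c : K) (G : Hom b c) (F1 F2 F3 : Hom a b)
      (α : Cell F2 F3) (β : Cell F1 F2), G ◁ (α ∗ β) = (G ◁ α) ∗ (G ◁ β);
  l_whl_id2 : forall (a b c : K) (G : Hom b c) (F : Hom a b),
      G ◁ id2 F = id2 (G ⊙ F);
  l_whr_vcomp : forall (a b c : K) (G1 G2 G3 : Hom b c) (F : Hom a b)
      (α : Cell G2 G3) (β : Cell G1 G2), (α ∗ β) ▷ F = (α ▷ F) ∗ (β ▷ F);
  l_whr_id2 : forall (a b c : K) (G : Hom b c) (F : Hom a b),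
      id2 G ▷ F = id2 (G ⊙ F);
  l_interchange : forall (a b c : K) (G G' : Hom b c) (F F' : Hom a b)
      (α : Cell G G') (β : Cell F F'),
      (G' ◁ β) ∗ (α ▷ F) = (α ▷ F') ∗ (G ◁ β);
  l_whl_id1 : forall (a b : K) (F F' : Hom a b) (α : Cell F F'),
      eqcell (l_idl L F') ∗ (id1 b ◁ α) = α ∗ eqcell (l_idl L F);
  l_whr_id1 : forall (a b : K) (G G' : Hom a b) (α : Cell G G'),
      eqcell (l_idr L G') ∗ (α ▷ id1 a) = α ∗ eqcell (l_idr L G);
  l_whl_comp : forall (a b c d : K) (H : Hom c d) (G : Hom b c)
      (F F' : Hom a b) (α : Cell F F'),
      eqcell (l_assoc L H G F') ∗ (H ◁ (G ◁ α))
      = ((H ⊙ G) ◁ α) ∗ eqcell (l_assoc L H G F);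
  l_whr_comp : forall (a b c d : K) (H H' : Hom c d) (G : Hom b c)
      (F : Hom a b) (α : Cell H H'),
      eqcell (l_assoc L H' G F) ∗ (α ▷ (G ⊙ F))
      = ((α ▷ G) ▷ F) ∗ eqcell (l_assoc L H G F);
  l_whl_whr : forall (a b c d : K) (H : Hom c d) (G G' : Hom b c)
      (F : Hom a b) (β : Cell G G'),
      eqcell (l_assoc L H G' F) ∗ (H ◁ (β ▷ F))
      = ((H ◁ β) ▷ F) ∗ eqcell (l_assoc L H G F)
}.

Record TwoCat := {
  tc_data :> TwoCatData;
  tc_laws1 : TwoCatLaws1 tc_data;
  tc_laws2 : TwoCatLaws2 tc_laws1
}.

Definition assoc1 {K : TwoCat} {a b c d : K} (h : Hom c d) (g : Hom b c)
  (f : Hom a b) : h ⊙ (g ⊙ f) = (h ⊙ g) ⊙ f := l_assoc (tc_laws1 K) h g f.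
Definition idl1 {K : TwoCat} {a b : K} (f : Hom a b) : id1 b ⊙ f = f :=
  l_idl (tc_laws1 K) f.
Definition idr1 {K : TwoCat} {a b : K} (f : Hom a b) : f ⊙ id1 a = f :=
  l_idr (tc_laws1 K) f.

Definition idem_split (K : TwoCat) : Prop :=
  forall (a b : K) (F : Hom a b) (e : Cell F F), e ∗ e = e ->
  exists (G : Hom a b) (p : Cell F G) (i : Cell G F), i ∗ p = e /\ p ∗ i = id2 G.

Record Monad (K : TwoCat) (k : K) := {
  mt : Hom k k;
  mmu : Cell (mt ⊙ mt) mt;
  meta : Cell (id1 k) mt;
  mon_assoc : mmu ∗ (mt ◁ mmu) = mmu ∗ (mmu ▷ mt) ∗ eqcell (assoc1 mt mt mt);
  mon_unit_l : mmu ∗ (meta ▷ mt) ∗ eqcell (eq_sym (idl1 mt)) = id2 mt;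
  mon_unit_r : mmu ∗ (mt ◁ meta) ∗ eqcell (eq_sym (idr1 mt)) = id2 mt
}.
Arguments mt {K k} M : rename.
Arguments mmu {K k} M : rename.
Arguments meta {K k} M : rename.

Definition etaw {K : TwoCat} {k a : K} (M : Monad k) (X : Hom a k)
  : Cell X (mt M ⊙ X) := (meta M ▷ X) ∗ eqcell (eq_sym (idl1 X)).

Definition is_alg {K : TwoCat} {k l : K} (M : Monad k) (A : Hom l k)
  (α : Cell (mt M ⊙ A) A) : Prop :=
  α ∗ (mt M ◁ α) = α ∗ (mmu M ▷ A) ∗ eqcell (assoc1 (mt M) (mt M) A)
  /\ α ∗ etaw M A = id2 A.
Arguments is_alg {K k l} M {A} α.

Definition is_alg_mor {K : TwoCat} {k l : K} (M : Monad k) {A B : Hom l k}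
  (α : Cell (mt M ⊙ A) A) (β : Cell (mt M ⊙ B) B) (ρ : Cell A B) : Prop :=
  β ∗ (mt M ◁ ρ) = ρ ∗ α.
Arguments is_alg_mor {K k l} M {A B} α β ρ.

Section Eqs.
Context {K : TwoCat}.

Lemma eq_tvX {k J l : K} (v : Hom J k) (f : Hom k J) (t : Hom k k)
  (e : v ⊙ f = t) (X : Hom l J) : t ⊙ (v ⊙ X) = v ⊙ ((f ⊙ v) ⊙ X).
Proof. rewrite <- e, !assoc1. reflexivity. Qed.

Lemma eq_vidX {k J l : K} (v : Hom J k) (X : Hom l J) :
  v ⊙ (id1 J ⊙ X) = v ⊙ X.
Proof. rewrite idl1. reflexivity. Qed.

Lemma eq_Wtv {k k' J : K} (v : Hom J k) (f : Hom k J) (t : Hom k k)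
  (e : v ⊙ f = t) (W : Hom k k') : (W ⊙ t) ⊙ v = W ⊙ (v ⊙ (f ⊙ v)).
Proof. rewrite <- e, !assoc1. reflexivity. Qed.

Lemma eq_Wvid {k k' J : K} (v : Hom J k) (W : Hom k k') :
  W ⊙ (v ⊙ id1 J) = W ⊙ v.
Proof. rewrite idr1. reflexivity. Qed.

Lemma eq_tt {k J : K} (v : Hom J k) (f : Hom k J) (t : Hom k k)
  (e : v ⊙ f = t) : (v ⊙ f) ⊙ (v ⊙ f) = t ⊙ t.
Proof. rewrite e. reflexivity. Qed.

Lemma eq_vfvf {k J : K} (v : Hom J k) (f : Hom k J) :
  (v ⊙ f) ⊙ (v ⊙ f) = v ⊙ ((f ⊙ v) ⊙ f).
Proof. rewrite !assoc1. reflexivity. Qed.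

End Eqs.

Definition canon_str_g {K : TwoCat} {k J l : K} {v : Hom J k} {f : Hom k J}
  {t : Hom k k} (e : v ⊙ f = t) (ε : Cell (f ⊙ v) (id1 J)) (X : Hom l J)
  : Cell (t ⊙ (v ⊙ X)) (v ⊙ X) :=
  eqcell (eq_vidX v X) ∗ (v ◁ (ε ▷ X)) ∗ eqcell (eq_tvX e X).

(* Eilenberg–Moore object of a monad: adjunction f ⊣ v with unit η,    *)
(* counit ε, t = v f, μ = v ε f, such that X ↦ (vX, vεX) is an         *)
(* isomorphism K(l, J(t)) ≅ t-Alg(l) for every object l.               *)
Record EMObject (K : TwoCat) (k : K) (M : Monad k) := {
  emJ : K;
  emf : Hom k emJ;
  emv : Hom emJ k;
  emeps : Cell (emf ⊙ emv) (id1 emJ);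
  em_t : emv ⊙ emf = mt M;
  (* triangle identities, the unit being η (viewed as id ⇒ v f) *)
  em_tri_f : eqcell (idl1 emf) ∗ (emeps ▷ emf) ∗ eqcell (assoc1 emf emv emf)
             ∗ (emf ◁ (eqcell (eq_sym em_t) ∗ meta M))
             ∗ eqcell (eq_sym (idr1 emf)) = id2 emf;
  em_tri_v : eqcell (idr1 emv) ∗ (emv ◁ emeps)
             ∗ eqcell (eq_sym (assoc1 emv emf emv))
             ∗ ((eqcell (eq_sym em_t) ∗ meta M) ▷ emv)
             ∗ eqcell (eq_sym (idl1 emv)) = id2 emv;
  em_mu : eqcell (eq_sym em_t) ∗ mmu M ∗ eqcell (eq_tt em_t)
          = eqcell (eq_vidX emv emf) ∗ (emv ◁ (emeps ▷ emf))
            ∗ eqcell (eq_vfvf emv emf);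
  em_alg : forall (l : K) (X : Hom l emJ), is_alg M (canon_str_g em_t emeps X);
  em_obj : forall (l : K) (A : Hom l k) (α : Cell (mt M ⊙ A) A),
      is_alg M α ->
      exists! X : Hom l emJ, exists e : emv ⊙ X = A,
        eqcell e ∗ canon_str_g em_t emeps X
          ∗ eqcell (f_equal (fun Y => mt M ⊙ Y) (eq_sym e)) = α;
  em_mor_func : forall (l : K) (X Y : Hom l emJ) (ω : Cell X Y),
      is_alg_mor M (canon_str_g em_t emeps X) (canon_str_g em_t emeps Y) (emv ◁ ω);
  em_mor : forall (l : K) (X Y : Hom l emJ) (ρ : Cell (emv ⊙ X) (emv ⊙ Y)),
      is_alg_mor M (canon_str_g em_t emeps X) (canon_str_g em_t emeps Y) ρ ->
      exists! ω : Cell X Y, emv ◁ ω = ρ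
}.
Arguments emJ {K k M} E : rename.
Arguments emf {K k M} E : rename.
Arguments emv {K k M} E : rename.
Arguments emeps {K k M} E : rename.
Arguments em_t {K k M} E : rename.

Definition canon_str {K : TwoCat} {k l : K} {M : Monad k} (E : EMObject M)
  (X : Hom l (emJ E)) : Cell (mt M ⊙ (emv E ⊙ X)) (emv E ⊙ X) :=
  canon_str_g (em_t E) (emeps E) X.
Arguments canon_str {K k l M} E X.

Definition vcounit {K : TwoCat} {k k' : K} {M : Monad k} (E : EMObject M)
  (W : Hom k k') : Cell ((W ⊙ mt M) ⊙ emv E) (W ⊙ emv E) :=
  eqcell (eq_Wvid (emv E) W) ∗ (W ◁ (emv E ◁ emeps E))
  ∗ eqcell (eq_Wtv (em_t E) W).
Arguments vcounit {K k k' M} E W.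

Definition Wmu {K : TwoCat} {k k' : K} (M : Monad k) (W : Hom k k')
  : Cell ((W ⊙ mt M) ⊙ mt M) (W ⊙ mt M) :=
  (W ◁ mmu M) ∗ eqcell (eq_sym (assoc1 W (mt M) (mt M))).

Definition phit {K : TwoCat} {k k' : K} {t : Hom k k} {t' : Hom k' k'}
  {W : Hom k k'} (φ : Cell (t' ⊙ W) (W ⊙ t)) : Cell (t' ⊙ (W ⊙ t)) ((W ⊙ t) ⊙ t) :=
  (φ ▷ t) ∗ eqcell (assoc1 t' W t).

Definition EMw1 {K : TwoCat} {k k' : K} (M : Monad k) (M' : Monad k')
  {V : Hom k k'} (ψ : Cell (mt M' ⊙ V) (V ⊙ mt M)) : Prop :=
  Wmu M V ∗ phit ψ ∗ (mt M' ◁ ψ)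
  = ψ ∗ (mmu M' ▷ V) ∗ eqcell (assoc1 (mt M') (mt M') V).
Arguments EMw1 {K k k'} M M' {V} ψ.

Definition EMw2 {K : TwoCat} {k k' : K} (M : Monad k) (M' : Monad k')
  {V W : Hom k k'} (ψ : Cell (mt M' ⊙ V) (V ⊙ mt M))
  (φ : Cell (mt M' ⊙ W) (W ⊙ mt M)) (ϱ : Cell V (W ⊙ mt M)) : Prop :=
  Wmu M W ∗ (ϱ ▷ mt M) ∗ ψ = Wmu M W ∗ phit φ ∗ (mt M' ◁ ϱ)
  /\ ϱ = Wmu M W ∗ phit φ ∗ etaw M' (W ⊙ mt M) ∗ ϱ.
Arguments EMw2 {K k k'} M M' {V W} ψ φ ϱ.

(* J^w.  With J = J(t), J' = J(t'), the splitting V v ⇒ Ṽ ⇒ V v of the  *)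
(* idempotent V v ε ∗ ψ v ∗ η' V v is written with Ṽ = v' J^w(V,ψ)      *)
(* (the paper requires v' J^w(V,ψ) = Ṽ on the nose); π : V v ⇒ v' Vb,  *)
(* ι : v' Vb ⇒ V v, and Vb = J^w(V,ψ) is characterized by               *)
(* v' ε' Vb = π ∗ V v ε ∗ ψ v ∗ t' ι.                                   *)
Definition IsJw {K : TwoCat} {k k' : K} {M : Monad k} {M' : Monad k'}
  (E : EMObject M) (E' : EMObject M') {V : Hom k k'}
  (ψ : Cell (mt M' ⊙ V) (V ⊙ mt M)) (Vb : Hom (emJ E) (emJ E'))
  (π : Cell (V ⊙ emv E) (emv E' ⊙ Vb)) (ι : Cell (emv E' ⊙ Vb) (V ⊙ emv E))
  : Prop :=
  ι ∗ π = vcounit E V ∗ (ψ ▷ emv E) ∗ eqcell (assoc1 (mt M') V (emv E))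
          ∗ etaw M' (V ⊙ emv E)
  /\ π ∗ ι = id2 (emv E' ⊙ Vb)
  /\ canon_str E' Vb = π ∗ vcounit E V ∗ (ψ ▷ emv E)
                         ∗ eqcell (assoc1 (mt M') V (emv E)) ∗ (mt M' ◁ ι).
Arguments IsJw {K k k' M M'} E E' {V} ψ Vb π ι.

(* the 2-cell that v' J^w(ϱ) must equal: π ∗ W v ε ∗ ϱ v ∗ ι *)
Definition Jw2 {K : TwoCat} {k k' : K} {M : Monad k} {M' : Monad k'}
  (E : EMObject M) (E' : EMObject M') {V W : Hom k k'}
  {Vb Wb : Hom (emJ E) (emJ E')}
  (πW : Cell (W ⊙ emv E) (emv E' ⊙ Wb)) (ιV : Cell (emv E' ⊙ Vb) (V ⊙ emv E))
  (ϱ : Cell V (W ⊙ mt M)) : Cell (emv E' ⊙ Vb) (emv E' ⊙ Wb) :=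
  πW ∗ vcounit E W ∗ (ϱ ▷ emv E) ∗ ιV.
Arguments Jw2 {K k k' M M'} E E' {V W Vb Wb} πW ιV ϱ.

Definition weak_iota_lifting {K : TwoCat} {k k' J J' : K}
  {v : Hom J k} {v' : Hom J' k'} {V W : Hom k k'} {Vb Wb : Hom J J'}
  (ιV : Cell (v' ⊙ Vb) (V ⊙ v)) (ιW : Cell (v' ⊙ Wb) (W ⊙ v))
  (ω : Cell V W) (X : Cell Vb Wb) : Prop :=
  ιW ∗ (v' ◁ X) = (ω ▷ v) ∗ ιV.

Definition weak_pi_lifting {K : TwoCat} {k k' J J' : K}
  {v : Hom J k} {v' : Hom J' k'} {V W : Hom k k'} {Vb Wb : Hom J J'}
  (πV : Cell (V ⊙ v) (v' ⊙ Vb)) (πW : Cell (W ⊙ v) (v' ⊙ Wb))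
  (ω : Cell V W) (X : Cell Vb Wb) : Prop :=
  (v' ◁ X) ∗ πV = πW ∗ (ω ▷ v).

(* Everything is transported along the injective map ϱ ↦ W v ε ∗ ϱ v from 2-cells
   V ⇒ W t to 2-cells V v ⇒ W v.  It turns ψ and φ into non-unital t'-actions a_V, a_W
   on V v and W v, whose idempotents e = a ∗ η' are split by the chosen (ι, π), and it
   turns each condition (i) and (ii) into an identity between ω v, a_V, a_W, e_V, e_W.
   Elementary manipulations with split idempotents show that these identities are
   equivalent to (iii), π ∗ a ∗ t'ι being the algebra structure v' ε' J^w of the retract.
   Finally (iii) is equivalent to (iv) because v' ◁ - is a bijection from 2-cells
   J^w(V,ψ) ⇒ J^w(W,φ) onto morphisms of t'-algebras, and every weak ι- or π-lifting X
   of ω satisfies v' X = π ∗ ω v ∗ ι. *)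

From Stdlib Require Import ProofIrrelevance Setoid.

Section Basics.
Context {K : TwoCat}.

Lemma vcompA {a b : K} {F G H I : Hom a b} (α : Cell H I) (β : Cell G H) (γ : Cell F G) :
  α ∗ (β ∗ γ) = (α ∗ β) ∗ γ.
Proof. exact (l_vassoc (tc_laws2 K) α β γ). Qed.
Lemma vcomp_idl {a b : K} {F G : Hom a b} (α : Cell F G) : id2 G ∗ α = α.
Proof. exact (l_vidl (tc_laws2 K) α). Qed.
Lemma vcomp_idr {a b : K} {F G : Hom a b} (α : Cell F G) : α ∗ id2 F = α.
Proof. exact (l_vidr (tc_laws2 K) α). Qed.
Lemma whl_vcomp {a b c : K} (G : Hom b c) {F1 F2 F3 : Hom a b} (α : Cell F2 F3) (β : Cell F1 F2) :
  G ◁ (α ∗ β) = (G ◁ α) ∗ (G ◁ β).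
Proof. exact (l_whl_vcomp (tc_laws2 K) G α β). Qed.
Lemma whl_id2 {a b c : K} (G : Hom b c) (F : Hom a b) : G ◁ id2 F = id2 (G ⊙ F).
Proof. exact (l_whl_id2 (tc_laws2 K) G F). Qed.
Lemma whr_vcomp {a b c : K} {G1 G2 G3 : Hom b c} (F : Hom a b) (α : Cell G2 G3) (β : Cell G1 G2) :
  (α ∗ β) ▷ F = (α ▷ F) ∗ (β ▷ F).
Proof. exact (l_whr_vcomp (tc_laws2 K) F α β). Qed.
Lemma whr_id2 {a b c : K} (G : Hom b c) (F : Hom a b) : id2 G ▷ F = id2 (G ⊙ F).
Proof. exact (l_whr_id2 (tc_laws2 K) G F). Qed.
Lemma interchange {a b c : K} {G G' : Hom b c} {F F' : Hom a b} (α : Cell G G') (β : Cell F F') :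
  (G' ◁ β) ∗ (α ▷ F) = (α ▷ F') ∗ (G ◁ β).
Proof. exact (l_interchange (tc_laws2 K) α β). Qed.

Lemma eqcell_irr {a b : K} {F G : Hom a b} (e e' : F = G) : eqcell e = eqcell e'.
Proof. rewrite (proof_irrelevance _ e e'). reflexivity. Qed.
Lemma eqcell_refl {a b : K} {F : Hom a b} (e : F = F) : eqcell e = id2 F.
Proof. rewrite (proof_irrelevance _ e eq_refl). reflexivity. Qed.
Lemma eqcell_trans {a b : K} {F G H : Hom a b} (e1 : G = H) (e2 : F = G) :
  eqcell e1 ∗ eqcell e2 = eqcell (eq_trans e2 e1).
Proof. destruct e1, e2. simpl. apply vcomp_idl. Qed.
Lemma eqcell_transA {a b : K} {F G H I : Hom a b} (e1 : G = H) (e2 : F = G) (x : Cell I F) :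
  eqcell e1 ∗ (eqcell e2 ∗ x) = eqcell (eq_trans e2 e1) ∗ x.
Proof. rewrite vcompA, eqcell_trans. reflexivity. Qed.
Lemma vcomp_eqcell_cancel {a b : K} {F G H : Hom a b} (e : F = G) (x y : Cell G H) :
  x ∗ eqcell e = y ∗ eqcell e <-> x = y.
Proof.
  split; [| intros ->; reflexivity].
  intro Hx. apply (f_equal (fun c => c ∗ eqcell (eq_sym e))) in Hx.
  rewrite <- !vcompA, eqcell_trans, eqcell_refl, !vcomp_idr in Hx. exact Hx.
Qed.

Lemma whl_eqcell {a b c : K} (G : Hom b c) {F F' : Hom a b} (e : F = F') :
  G ◁ eqcell e = eqcell (f_equal (comp1 G) e).
Proof. destruct e. apply whl_id2. Qed.
Lemma whr_eqcell {a b c : K} {G G' : Hom b c} (F : Hom a b) (e : G = G') :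
  eqcell e ▷ F = eqcell (f_equal (fun g => g ⊙ F) e).
Proof. destruct e. apply whr_id2. Qed.

Lemma whl_whl {a b c d : K} (H : Hom c d) (G : Hom b c) {F F' : Hom a b} (α : Cell F F') :
  H ◁ (G ◁ α) = eqcell (eq_sym (assoc1 H G F')) ∗ ((H ⊙ G) ◁ α)
    ∗ eqcell (assoc1 H G F).
Proof.
  pose proof (l_whl_comp (tc_laws2 K) H G α) as E. unfold assoc1.
  rewrite <- E, vcompA, eqcell_trans, eqcell_refl, vcomp_idl. reflexivity.
Qed.
Lemma whr_whr {a b c d : K} {H H' : Hom c d} (G : Hom b c) (F : Hom a b) (α : Cell H H') :
  (α ▷ G) ▷ F = eqcell (assoc1 H' G F) ∗ (α ▷ (G ⊙ F))
    ∗ eqcell (eq_sym (assoc1 H G F)).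
Proof.
  pose proof (l_whr_comp (tc_laws2 K) G F α) as E. unfold assoc1.
  rewrite vcompA, E, <- vcompA, eqcell_trans, eqcell_refl, vcomp_idr. reflexivity.
Qed.
Lemma whl_whr {a b c d : K} (H : Hom c d) {G G' : Hom b c} (F : Hom a b) (β : Cell G G') :
  (H ◁ β) ▷ F = eqcell (assoc1 H G' F) ∗ (H ◁ (β ▷ F))
    ∗ eqcell (eq_sym (assoc1 H G F)).
Proof.
  pose proof (l_whl_whr (tc_laws2 K) H F β) as E. unfold assoc1.
  rewrite vcompA, E, <- vcompA, eqcell_trans, eqcell_refl, vcomp_idr. reflexivity.
Qed.
Lemma whl_id1 {a b : K} {F F' : Hom a b} (α : Cell F F') :
  id1 b ◁ α = eqcell (eq_sym (idl1 F')) ∗ α ∗ eqcell (idl1 F).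
Proof.
  pose proof (l_whl_id1 (tc_laws2 K) α) as E. unfold idl1.
  rewrite <- E, vcompA, eqcell_trans, eqcell_refl, vcomp_idl. reflexivity.
Qed.
Lemma whr_id1 {a b : K} {G G' : Hom a b} (α : Cell G G') :
  α ▷ id1 a = eqcell (eq_sym (idr1 G')) ∗ α ∗ eqcell (idr1 G).
Proof.
  pose proof (l_whr_id1 (tc_laws2 K) α) as E. unfold idr1.
  rewrite <- E, vcompA, eqcell_trans, eqcell_refl, vcomp_idl. reflexivity.
Qed.

Lemma whl_id1_inv {a b : K} {F F' : Hom a b} (α : Cell F F') :
  eqcell (eq_sym (idl1 F')) ∗ α = (id1 b ◁ α) ∗ eqcell (eq_sym (idl1 F)).
Proof. rewrite whl_id1, <- !vcompA, eqcell_trans, eqcell_refl, vcomp_idr. reflexivity. Qed.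

Lemma whl_comp {a b c d : K} (H : Hom c d) (G : Hom b c) {F F' : Hom a b} (α : Cell F F') :
  (H ⊙ G) ◁ α = eqcell (assoc1 H G F') ∗ (H ◁ (G ◁ α))
    ∗ eqcell (eq_sym (assoc1 H G F)).
Proof.
  rewrite whl_whl, !vcompA, eqcell_trans, eqcell_refl, vcomp_idl, <- vcompA, eqcell_trans,
    eqcell_refl, vcomp_idr.
  reflexivity.
Qed.

Lemma whr_transport {a b c : K} {A A' : Hom b c} (ω : Cell A A') {X X' : Hom a b} (e : X = X') :
  ω ▷ X = eqcell (f_equal (comp1 A') (eq_sym e)) ∗ (ω ▷ X') ∗ eqcell (f_equal (comp1 A) e).
Proof. destruct e. simpl. rewrite vcomp_idl, vcomp_idr. reflexivity. Qed.
Lemma whl_transport {a b c : K} {G G' : Hom b c} (e : G = G') {F F' : Hom a b} (α : Cell F F') :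
  G ◁ α = eqcell (f_equal (fun g => g ⊙ F') (eq_sym e)) ∗ (G' ◁ α)
          ∗ eqcell (f_equal (fun g => g ⊙ F) e).
Proof. destruct e. simpl. rewrite vcomp_idl, vcomp_idr. reflexivity. Qed.

End Basics.

Lemma vcomp2_subst {K : TwoCat} {a b : K} {F G H : Hom a b}
  {a1 : Cell G H} {b1 : Cell F G} {c : Cell F H} :
  a1 ∗ b1 = c -> forall (I : Hom a b) (x : Cell I F), a1 ∗ (b1 ∗ x) = c ∗ x.
Proof. intros e I x. rewrite vcompA, e. reflexivity. Qed.
Lemma vcomp3_subst {K : TwoCat} {a b : K} {F G H P : Hom a b}
  {a1 : Cell H P} {b1 : Cell G H} {c1 : Cell F G} {c : Cell F P} :
  a1 ∗ (b1 ∗ c1) = c ->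
  forall (I : Hom a b) (x : Cell I F), a1 ∗ (b1 ∗ (c1 ∗ x)) = c ∗ x.
Proof. intros e I x. rewrite (vcompA b1), vcompA, e. reflexivity. Qed.

(* Normal form of a composite of 2-cells: whiskerings distributed over composites,
   composites right-associated, adjacent [eqcell]s merged and trivial ones removed. *)
Ltac cells_norm :=
  repeat (rewrite ?whl_vcomp, ?whr_vcomp, ?whl_id2, ?whr_id2, ?whl_eqcell, ?whr_eqcell,
            ?vcomp_idl, ?vcomp_idr);
  repeat rewrite <- vcompA;
  repeat (rewrite ?eqcell_transA, ?eqcell_trans);
  repeat (rewrite eqcell_refl; rewrite ?vcomp_idl, ?vcomp_idr).

(* [eqcell]s between the same 1-cells are equal by proof irrelevance. *)
Ltac cells_congr := repeat match goal with
 | |- ?x = ?x => reflexivity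
 | |- eqcell _ = eqcell _ => apply eqcell_irr
 | |- vcomp _ _ = vcomp _ _ => refine (f_equal2 (fun x y => vcomp x y) _ _)
 end.

(* Make all [eqcell]s in [H], and then in the goal, between the same 1-cells share one
   equality proof, so that [H] can be used for rewriting. *)
Ltac sync_eqcells_in H := repeat match type of H with context [@eqcell ?K0 ?a ?b ?F ?G ?e] =>
   match type of H with context [@eqcell K0 a b F G ?e'] =>
      assert_fails (constr_eq e e'); rewrite (eqcell_irr e' e) in H end end.
Ltac sync_eqcells H :=
  sync_eqcells_in H;
  repeat match type of H with context [@eqcell ?K0 ?a ?b ?F ?G ?e] =>
   match goal with |- context [@eqcell K0 a b F G ?e'] =>
      assert_fails (constr_eq e e'); rewrite (eqcell_irr e' e) end end.

Section MonadWhiskering.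
Context {K : TwoCat} {k : K} (M : Monad k).

Definition muw {a : K} (Y : Hom a k) : Cell (mt M ⊙ (mt M ⊙ Y)) (mt M ⊙ Y) :=
  (mmu M ▷ Y) ∗ eqcell (assoc1 (mt M) (mt M) Y).

Lemma etaw_natural {a : K} {X Y : Hom a k} (α : Cell X Y) :
  etaw M Y ∗ α = (mt M ◁ α) ∗ etaw M X.
Proof.
  unfold etaw. rewrite <- !vcompA.
  rewrite whl_id1_inv. rewrite !vcompA, interchange. cells_norm. cells_congr.
Qed.

Lemma muw_whl_etaw {a : K} (Y : Hom a k) : muw Y ∗ (mt M ◁ etaw M Y) = id2 _.
Proof.
  pose proof (f_equal (fun c => c ▷ Y) (mon_unit_r M)) as H. simpl in H.
  rewrite whr_id2, !whr_vcomp, whl_whr in H. unfold muw, etaw. revert H. cells_norm.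
  intro H. rewrite <- H. cells_congr.
Qed.

Lemma muw_etaw {a : K} (Y : Hom a k) : muw Y ∗ etaw M (mt M ⊙ Y) = id2 _.
Proof.
  pose proof (f_equal (fun c => c ▷ Y) (mon_unit_l M)) as H. simpl in H.
  rewrite whr_id2, !whr_vcomp, whr_whr in H. unfold muw, etaw. revert H. cells_norm.
  intro H. rewrite <- H. cells_congr.
Qed.
End MonadWhiskering.

Section EMAdjunction.
Context {K : TwoCat} {k : K} (M : Monad k) (E : EMObject M).

Definition eq_tv_vfv : mt M ⊙ emv E = emv E ⊙ (emf E ⊙ emv E) :=
  eq_trans (f_equal (fun x => x ⊙ emv E) (eq_sym (em_t E)))
    (eq_sym (assoc1 (emv E) (emf E) (emv E))).

Lemma vcounit_natural {k' : K} {A A' : Hom k k'} (ω : Cell A A') :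
  vcounit E A' ∗ ((ω ▷ mt M) ▷ emv E) = (ω ▷ emv E) ∗ vcounit E A.
Proof.
  unfold vcounit. rewrite whr_whr, (whr_transport ω eq_tv_vfv). cells_norm.
  rewrite (vcomp2_subst (interchange ω (emv E ◁ emeps E))). cells_norm.
  rewrite (whr_transport ω (idr1 (emv E))). cells_norm. cells_congr.
Qed.

Lemma emeps_interchange :
  emeps E ∗ eqcell (idl1 (emf E ⊙ emv E)) ∗ (emeps E ▷ (emf E ⊙ emv E))
  = emeps E ∗ eqcell (idr1 (emf E ⊙ emv E)) ∗ ((emf E ⊙ emv E) ◁ emeps E).
Proof.
  pose proof (interchange (emeps E) (emeps E)) as H.
  rewrite whl_id1, whr_id1 in H. revert H; cells_norm; intro H.
  apply (f_equal (fun c => eqcell (idl1 (id1 (emJ E))) ∗ c)) in H.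
  revert H; cells_norm; intro H.
  sync_eqcells H. rewrite H. cells_congr.
Qed.

Lemma mu_v_eps_f :
  mmu M = eqcell (em_t E) ∗ eqcell (eq_vidX (emv E) (emf E)) ∗ (emv E ◁ (emeps E ▷ emf E))
          ∗ eqcell (eq_vfvf (emv E) (emf E)) ∗ eqcell (eq_sym (eq_tt (em_t E))).
Proof.
  transitivity (eqcell (em_t E) ∗ ((eqcell (eq_sym (em_t E)) ∗ mmu M
                  ∗ eqcell (eq_tt (em_t E))) ∗ eqcell (eq_sym (eq_tt (em_t E))))).
  { cells_norm. reflexivity. }
  rewrite (em_mu E). cells_norm. reflexivity.
Qed.

Lemma vcounit_Wmu {k' : K} (A : Hom k k') :
  vcounit E A ∗ (Wmu M A ▷ emv E) = vcounit E A ∗ vcounit E (A ⊙ mt M).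
Proof.
  unfold vcounit, Wmu. rewrite mu_v_eps_f. cells_norm.
  rewrite !whl_whr, whr_whr. cells_norm.
  rewrite (whl_transport (f_equal (comp1 A) (eq_sym (em_t E))) (emv E ◁ emeps E)).
  rewrite !whl_comp. cells_norm.
  pose proof (f_equal (fun c => A ◁ (emv E ◁ c)) emeps_interchange) as H. simpl in H.
  rewrite whl_comp in H. revert H; cells_norm; intro H. sync_eqcells H.
  rewrite (vcomp3_subst H). cells_norm. cells_congr.
Qed.

(* ϱ ↦ A v ε ∗ ϱ v is injective and turns the Kleisli-type composite W μ ∗ ϱ t ∗ σ into
   composition; it carries every condition of the proposition on 2-cells into W t to a
   condition on 2-cells V v ⇒ W v. *)
Definition vtransp {k' : K} {A B : Hom k k'} (ρ : Cell B (A ⊙ mt M))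
  : Cell (B ⊙ emv E) (A ⊙ emv E) :=
  vcounit E A ∗ (ρ ▷ emv E).

Lemma vtransp_kleisli {k' : K} {A B C : Hom k k'} (ρ : Cell B (A ⊙ mt M))
  (σ : Cell C (B ⊙ mt M)) :
  vtransp (Wmu M A ∗ (ρ ▷ mt M) ∗ σ) = vtransp ρ ∗ vtransp σ.
Proof.
  unfold vtransp. cells_norm. rewrite (vcomp2_subst (vcounit_Wmu A)). cells_norm.
  rewrite (vcomp2_subst (vcounit_natural ρ)). cells_norm. reflexivity.
Qed.

Lemma vtransp_vcomp {k' : K} {A B C : Hom k k'} (ρ : Cell B (A ⊙ mt M)) (α : Cell C B) :
  vtransp (ρ ∗ α) = vtransp ρ ∗ (α ▷ emv E).
Proof. unfold vtransp. cells_norm. reflexivity. Qed.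

Lemma vtransp_natural {k' : K} {A A' B : Hom k k'} (ω : Cell A A') (ρ : Cell B (A ⊙ mt M)) :
  vtransp ((ω ▷ mt M) ∗ ρ) = (ω ▷ emv E) ∗ vtransp ρ.
Proof.
  unfold vtransp. cells_norm. rewrite (vcomp2_subst (vcounit_natural ω)). cells_norm.
  reflexivity.
Qed.

Lemma vcounit_whl {k' k'' : K} (G : Hom k' k'') (A : Hom k k') :
  vcounit E (G ⊙ A) = eqcell (assoc1 G A (emv E)) ∗ (G ◁ vcounit E A)
    ∗ eqcell (eq_trans (f_equal (fun x => x ⊙ emv E) (eq_sym (assoc1 G A (mt M))))
                (eq_sym (assoc1 G (A ⊙ mt M) (emv E)))).
Proof. unfold vcounit. rewrite whl_comp. cells_norm. cells_congr. Qed.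

Lemma vtransp_whl {k' k'' : K} (G : Hom k' k'') {A X : Hom k k'} (ρ : Cell X (A ⊙ mt M)) :
  vtransp (eqcell (assoc1 G A (mt M)) ∗ (G ◁ ρ)) =
  eqcell (assoc1 G A (emv E)) ∗ (G ◁ vtransp ρ) ∗ eqcell (eq_sym (assoc1 G X (emv E))).
Proof.
  unfold vtransp. rewrite vcounit_whl. cells_norm. rewrite (whl_whr G (emv E) ρ).
  cells_norm. cells_congr.
Qed.

Lemma vcounit_unit {k' : K} (A : Hom k k') :
  eqcell (eq_trans (eq_sym (assoc1 A (emv E) (emf E))) (f_equal (comp1 A) (em_t E)))
  ∗ (vcounit E A ▷ emf E)
  ∗ eqcell (eq_trans (f_equal (comp1 (A ⊙ mt M)) (eq_sym (em_t E)))
              (assoc1 (A ⊙ mt M) (emv E) (emf E)))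
  ∗ ((A ⊙ mt M) ◁ meta M) ∗ eqcell (eq_sym (idr1 (A ⊙ mt M))) = id2 (A ⊙ mt M).
Proof.
  pose proof (f_equal (fun c => A ◁ c) (mon_unit_r M)) as H. simpl in H.
  rewrite mu_v_eps_f in H. rewrite whl_id2 in H. revert H; cells_norm; intro H.
  unfold vcounit. rewrite whl_comp. cells_norm. rewrite !whl_whr. cells_norm.
  rewrite <- H. cells_congr.
Qed.

Lemma vcounit_unit_subst {k' : K} (A : Hom k k') {X : Hom k k'} (x : Cell X (A ⊙ mt M)) :
  eqcell (eq_trans (eq_sym (assoc1 A (emv E) (emf E))) (f_equal (comp1 A) (em_t E)))
  ∗ ((vcounit E A ▷ emf E)
  ∗ (eqcell (eq_trans (f_equal (comp1 (A ⊙ mt M)) (eq_sym (em_t E)))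
               (assoc1 (A ⊙ mt M) (emv E) (emf E)))
  ∗ (((A ⊙ mt M) ◁ meta M) ∗ (eqcell (eq_sym (idr1 (A ⊙ mt M))) ∗ x)))) = x.
Proof.
  pose proof (vcounit_unit A) as H. rewrite !vcompA in H.
  rewrite !vcompA, H, vcomp_idl. reflexivity.
Qed.

Lemma vtransp_inj {k' : K} {A B : Hom k k'} (ρ ρ' : Cell B (A ⊙ mt M)) :
  vtransp ρ = vtransp ρ' -> ρ = ρ'.
Proof.
  intro HU.
  (* transposing back along f ⊣ v recovers the 2-cell *)
  assert (Hr : forall r : Cell B (A ⊙ mt M),
    r = eqcell (eq_trans (eq_sym (assoc1 A (emv E) (emf E))) (f_equal (comp1 A) (em_t E)))
      ∗ (vtransp r ▷ emf E)
      ∗ eqcell (eq_trans (f_equal (comp1 B) (eq_sym (em_t E))) (assoc1 B (emv E) (emf E)))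
      ∗ (B ◁ meta M) ∗ eqcell (eq_sym (idr1 B))).
  { intro r. unfold vtransp. rewrite whr_vcomp, whr_whr, (whr_transport r (em_t E)).
    cells_norm. rewrite (vcomp2_subst (eq_sym (interchange r (meta M)))), whr_id1.
    cells_norm.
    rewrite vcounit_unit_subst. reflexivity. }
  rewrite (Hr ρ), (Hr ρ'), HU. reflexivity.
Qed.

End EMAdjunction.

Definition act_idem {K : TwoCat} {J k' : K} {M' : Monad k'} {P : Hom J k'}
  (a : Cell (mt M' ⊙ P) P) : Cell P P := a ∗ etaw M' P.

Section VAction.
Context {K : TwoCat} {k k' : K} (M : Monad k) (M' : Monad k') (E : EMObject M).

Definition vact {X : Hom k k'} (χ : Cell (mt M' ⊙ X) (X ⊙ mt M))
  : Cell (mt M' ⊙ (X ⊙ emv E)) (X ⊙ emv E) :=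
  vcounit E X ∗ (χ ▷ emv E) ∗ eqcell (assoc1 (mt M') X (emv E)).

Lemma vtransp_vact {X : Hom k k'} (χ : Cell (mt M' ⊙ X) (X ⊙ mt M)) :
  vtransp M E χ = vact χ ∗ eqcell (eq_sym (assoc1 (mt M') X (emv E))).
Proof. unfold vact, vtransp. cells_norm. reflexivity. Qed.

Lemma etaw_whr (X : Hom k k') :
  etaw M' X ▷ emv E = eqcell (assoc1 (mt M') X (emv E)) ∗ etaw M' (X ⊙ emv E).
Proof. unfold etaw. cells_norm. rewrite whr_whr. cells_norm. cells_congr. Qed.

Lemma vact_assoc {X : Hom k k'} (χ : Cell (mt M' ⊙ X) (X ⊙ mt M)) (Hχ : EMw1 M M' χ) :
  vact χ ∗ (mt M' ◁ vact χ) = vact χ ∗ muw M' (X ⊙ emv E).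
Proof.
  pose proof (f_equal (vtransp M E) Hχ) as H. unfold phit in H.
  revert H; cells_norm; intro H.
  rewrite vtransp_kleisli, vtransp_whl, vtransp_vcomp, vtransp_vact in H. unfold muw.
  rewrite whr_vcomp, whr_whr in H. revert H; cells_norm; intro H.
  apply (f_equal (fun c => c ∗ eqcell (eq_trans
           (f_equal (comp1 (mt M')) (assoc1 (mt M') X (emv E)))
           (assoc1 (mt M') (mt M' ⊙ X) (emv E))))) in H.
  etransitivity; [| etransitivity; [apply H |]]; cells_norm; cells_congr.
Qed.

Lemma vact_whl_idem {X : Hom k k'} (χ : Cell (mt M' ⊙ X) (X ⊙ mt M)) (Hχ : EMw1 M M' χ) :
  vact χ ∗ (mt M' ◁ act_idem (vact χ)) = vact χ.
Proof.
  unfold act_idem.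
  rewrite whl_vcomp, vcompA, vact_assoc, <- vcompA, muw_whl_etaw, vcomp_idr by exact Hχ.
  reflexivity.
Qed.

Lemma act_idem_vact {X : Hom k k'} (χ : Cell (mt M' ⊙ X) (X ⊙ mt M)) (Hχ : EMw1 M M' χ) :
  act_idem (vact χ) ∗ vact χ = vact χ.
Proof.
  unfold act_idem.
  rewrite <- vcompA, etaw_natural, vcompA, vact_assoc, <- vcompA, muw_etaw, vcomp_idr
    by exact Hχ.
  reflexivity.
Qed.

Lemma vact_idem_idem {X : Hom k k'} (χ : Cell (mt M' ⊙ X) (X ⊙ mt M)) (Hχ : EMw1 M M' χ) :
  act_idem (vact χ) ∗ act_idem (vact χ) = act_idem (vact χ).
Proof. unfold act_idem at 2. rewrite vcompA, act_idem_vact by exact Hχ. reflexivity. Qed.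

Lemma vtransp_kleisli_act {W Y : Hom k k'} (φ : Cell (mt M' ⊙ W) (W ⊙ mt M))
  (ρ : Cell Y (W ⊙ mt M)) :
  vtransp M E (Wmu M W ∗ phit φ ∗ (mt M' ◁ ρ))
  = vact φ ∗ (mt M' ◁ vtransp M E ρ) ∗ eqcell (eq_sym (assoc1 (mt M') Y (emv E))).
Proof.
  unfold phit. cells_norm. rewrite vtransp_kleisli, vtransp_whl, vtransp_vact.
  cells_norm. cells_congr.
Qed.

Lemma vtransp_kleisli_unit {W Y : Hom k k'} (φ : Cell (mt M' ⊙ W) (W ⊙ mt M))
  (ρ : Cell Y (W ⊙ mt M)) :
  vtransp M E (Wmu M W ∗ phit φ ∗ etaw M' (W ⊙ mt M) ∗ ρ)
  = act_idem (vact φ) ∗ vtransp M E ρ.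
Proof.
  rewrite etaw_natural, (vcompA (phit φ)), (vcompA (Wmu M W)), vtransp_vcomp,
    vtransp_kleisli_act, etaw_whr.
  cells_norm. rewrite <- etaw_natural. unfold act_idem. cells_norm. reflexivity.
Qed.
End VAction.

Section Actions.
Context {K : TwoCat} {J k' : K} {M' : Monad k'} {P Q : Hom J k'}
  {aP : Cell (mt M' ⊙ P) P} {aQ : Cell (mt M' ⊙ Q) Q} {w : Cell P Q}.

Lemma act_mor_iota_idem :
  w ∗ aP = aQ ∗ (mt M' ◁ (w ∗ act_idem aP))
  -> act_idem aQ ∗ (w ∗ act_idem aP) = w ∗ act_idem aP.
Proof.
  intro H. unfold act_idem at 1.
  rewrite <- vcompA, (etaw_natural M' (w ∗ act_idem aP)), vcompA, <- H, <- vcompA.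
  reflexivity.
Qed.

Lemma act_mor_pi_idem :
  aQ ∗ (mt M' ◁ w) = act_idem aQ ∗ w ∗ aP
  -> act_idem aQ ∗ (w ∗ act_idem aP) = act_idem aQ ∗ w.
Proof.
  intro H. unfold act_idem at 2.
  rewrite (vcompA w), (vcompA (act_idem aQ)), <- H, <- vcompA, <- (etaw_natural M' w),
    vcompA.
  reflexivity.
Qed.

End Actions.

(* Abstracts V v with the action induced by ψ and the splitting of its idempotent chosen
   in the construction of J^w(V,ψ). *)
Record split_action {K : TwoCat} {J k' : K} (M' : Monad k') (P P' : Hom J k') := {
  sa_act : Cell (mt M' ⊙ P) P;
  sa_iota : Cell P' P;
  sa_pi : Cell P P';
  sa_act_idem : sa_act ∗ (mt M' ◁ act_idem sa_act) = sa_act;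
  sa_idem_act : act_idem sa_act ∗ sa_act = sa_act;
  sa_split : sa_iota ∗ sa_pi = act_idem sa_act;
  sa_retract : sa_pi ∗ sa_iota = id2 P'
}.
Arguments sa_act {K J k' M' P P'} S : rename.
Arguments sa_iota {K J k' M' P P'} S : rename.
Arguments sa_pi {K J k' M' P P'} S : rename.
Arguments sa_act_idem {K J k' M' P P'} S : rename.
Arguments sa_idem_act {K J k' M' P P'} S : rename.
Arguments sa_split {K J k' M' P P'} S : rename.
Arguments sa_retract {K J k' M' P P'} S : rename.

Section SplitActions.
Context {K : TwoCat} {J k' : K} {M' : Monad k'}.

(* for J^w(V,ψ) this is v' ε' J^w(V,ψ), see canon_str_Jw *)
Definition sa_alg {P P' : Hom J k'} (S : split_action M' P P')
  : Cell (mt M' ⊙ P') P' :=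
  sa_pi S ∗ sa_act S ∗ (mt M' ◁ sa_iota S).

Section Retract.
Context {P P' : Hom J k'} (S : split_action M' P P').

Lemma sa_idem_iota : act_idem (sa_act S) ∗ sa_iota S = sa_iota S.
Proof. rewrite <- sa_split, <- vcompA, sa_retract, vcomp_idr. reflexivity. Qed.

Lemma sa_pi_idem : sa_pi S ∗ act_idem (sa_act S) = sa_pi S.
Proof. rewrite <- sa_split, vcompA, sa_retract, vcomp_idl. reflexivity. Qed.

Lemma sa_idem_idem : act_idem (sa_act S) ∗ act_idem (sa_act S) = act_idem (sa_act S).
Proof. unfold act_idem at 2. rewrite vcompA, sa_idem_act. reflexivity. Qed.

End Retract.

Section Morphisms.
Context {P P' Q Q' : Hom J k'} (SP : split_action M' P P')
  (SQ : split_action M' Q Q') (w : Cell P Q).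

Local Notation t' := (mt M').
Local Notation aP := (sa_act SP).
Local Notation aQ := (sa_act SQ).
Local Notation eP := (act_idem (sa_act SP)).
Local Notation eQ := (act_idem (sa_act SQ)).
Local Notation ιP := (sa_iota SP).
Local Notation πP := (sa_pi SP).
Local Notation ιQ := (sa_iota SQ).
Local Notation πQ := (sa_pi SQ).

Lemma split_alg_mor_iff :
  is_alg_mor M' (sa_alg SP) (sa_alg SQ) (πQ ∗ w ∗ ιP)
  <-> aQ ∗ (t' ◁ (w ∗ eP)) = eQ ∗ (w ∗ aP).
Proof.
  unfold is_alg_mor, sa_alg.
  assert (lhs : (πQ ∗ aQ ∗ (t' ◁ ιQ)) ∗ (t' ◁ (πQ ∗ w ∗ ιP))
                = πQ ∗ (aQ ∗ (t' ◁ (w ∗ ιP)))).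
  { rewrite (whl_vcomp _ πQ), <- !vcompA, (vcompA (t' ◁ ιQ)), <- whl_vcomp,
      sa_split, (vcompA aQ), sa_act_idem. reflexivity. }
  assert (rhs : (πQ ∗ w ∗ ιP) ∗ (πP ∗ aP ∗ (t' ◁ ιP)) = πQ ∗ (w ∗ (aP ∗ (t' ◁ ιP)))).
  { rewrite <- !vcompA, (vcompA ιP πP), sa_split, (vcompA _ aP), sa_idem_act.
    reflexivity. }
  rewrite lhs, rhs. split; intro H.
  - transitivity (ιQ ∗ ((πQ ∗ (aQ ∗ (t' ◁ (w ∗ ιP)))) ∗ (t' ◁ πP))).
    + rewrite <- !vcompA, (vcompA ιQ πQ), sa_split, (vcompA _ aQ), sa_idem_act,
        <- whl_vcomp, <- vcompA, sa_split. reflexivity.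
    + rewrite H, <- !vcompA, (vcompA ιQ πQ), sa_split, <- whl_vcomp, sa_split,
        sa_act_idem. reflexivity.
  - transitivity (πQ ∗ ((aQ ∗ (t' ◁ (w ∗ eP))) ∗ (t' ◁ ιP))).
    + rewrite <- (vcompA aQ), <- whl_vcomp, <- vcompA, sa_idem_iota. reflexivity.
    + rewrite H, !vcompA, sa_pi_idem. reflexivity.
Qed.

Lemma iota_split_mor_iff :
  ιQ ∗ (πQ ∗ w ∗ ιP) = w ∗ ιP <-> eQ ∗ (w ∗ eP) = w ∗ eP.
Proof.
  rewrite (vcompA ιQ πQ), sa_split. split; intro H.
  - rewrite <- (sa_split SP), (vcompA w ιP), (vcompA _ (w ∗ ιP)), H.
    reflexivity.
  - rewrite <- (sa_idem_iota SP), (vcompA w eP), (vcompA eQ (w ∗ eP)), H. reflexivity.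
Qed.

Lemma split_mor_pi_iff :
  (πQ ∗ w ∗ ιP) ∗ πP = πQ ∗ w <-> eQ ∗ (w ∗ eP) = eQ ∗ w.
Proof.
  rewrite <- !vcompA, sa_split. split; intro H.
  - rewrite <- (sa_split SQ), <- !vcompA, H. reflexivity.
  - rewrite <- (sa_pi_idem SQ), <- !vcompA, H. reflexivity.
Qed.

Lemma split_mor_both_iff :
  ιQ ∗ πQ ∗ w = w ∗ ιP ∗ πP
  <-> ιQ ∗ (πQ ∗ w ∗ ιP) = w ∗ ιP /\ (πQ ∗ w ∗ ιP) ∗ πP = πQ ∗ w.
Proof.
  rewrite iota_split_mor_iff, split_mor_pi_iff, (vcompA ιQ πQ), !sa_split. split.
  - intro H. split.
    + rewrite (vcompA eQ w), H, <- vcompA, sa_idem_idem. reflexivity.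
    + rewrite <- H, vcompA, sa_idem_idem. reflexivity.
  - intros [H1 H2]. rewrite <- H2. exact H1.
Qed.

Lemma act_mor_iota_iff :
  w ∗ aP = aQ ∗ (t' ◁ (w ∗ eP))
  <-> is_alg_mor M' (sa_alg SP) (sa_alg SQ) (πQ ∗ w ∗ ιP)
      /\ ιQ ∗ (πQ ∗ w ∗ ιP) = w ∗ ιP.
Proof.
  rewrite split_alg_mor_iff, iota_split_mor_iff. split.
  - intro H. pose proof (act_mor_iota_idem H) as D. split; [| exact D].
    rewrite <- H, <- (sa_idem_act SP), (vcompA w eP), (vcompA eQ (w ∗ eP)), D.
    reflexivity.
  - intros [H D]. rewrite H, <- (sa_idem_act SP), (vcompA w eP), (vcompA eQ (w ∗ eP)), D.
    reflexivity.
Qed.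

Lemma act_mor_pi_iff :
  aQ ∗ (t' ◁ w) = eQ ∗ w ∗ aP
  <-> is_alg_mor M' (sa_alg SP) (sa_alg SQ) (πQ ∗ w ∗ ιP)
      /\ (πQ ∗ w ∗ ιP) ∗ πP = πQ ∗ w.
Proof.
  rewrite split_alg_mor_iff, split_mor_pi_iff.
  assert (absorb : eQ ∗ (w ∗ eP) = eQ ∗ w -> aQ ∗ (t' ◁ (w ∗ eP)) = aQ ∗ (t' ◁ w)).
  { intro D. rewrite <- (sa_act_idem SQ) at 1.
    rewrite <- vcompA, <- whl_vcomp, D, whl_vcomp, vcompA,
      sa_act_idem. reflexivity. }
  split.
  - intro H. pose proof (act_mor_pi_idem H) as D. split; [| exact D].
    rewrite absorb by exact D. exact H.
  - intros [H D]. rewrite <- absorb by exact D. exact H.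
Qed.

Lemma act_mor_iff_iota_pi :
  aQ ∗ (t' ◁ w) = w ∗ aP
  <-> w ∗ aP = aQ ∗ (t' ◁ (w ∗ eP)) /\ aQ ∗ (t' ◁ w) = eQ ∗ w ∗ aP.
Proof.
  split.
  - intro H. split.
    + rewrite whl_vcomp, vcompA, H, <- vcompA, sa_act_idem. reflexivity.
    + rewrite <- H, vcompA, sa_idem_act. reflexivity.
  - intros [H1 H2].
    rewrite H1, <- (act_mor_iota_idem H1), (act_mor_pi_idem H2), whl_vcomp, vcompA,
      sa_act_idem.
    reflexivity.
Qed.

Lemma act_mor_iff :
  aQ ∗ (t' ◁ w) = w ∗ aP
  <-> is_alg_mor M' (sa_alg SP) (sa_alg SQ) (πQ ∗ w ∗ ιP)
      /\ ιQ ∗ πQ ∗ w = w ∗ ιP ∗ πP.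
Proof.
  rewrite act_mor_iff_iota_pi, act_mor_iota_iff, act_mor_pi_iff, split_mor_both_iff.
  tauto.
Qed.

End Morphisms.
End SplitActions.

Section Transport.
Context {K : TwoCat} {k k' : K} {M : Monad k} {M' : Monad k'} (E : EMObject M).
Context {V W : Hom k k'} (ψ : Cell (mt M' ⊙ V) (V ⊙ mt M))
  (φ : Cell (mt M' ⊙ W) (W ⊙ mt M)) (ω : Cell V W).

Local Notation t := (mt M).
Local Notation t' := (mt M').
Local Notation aV := (vact M M' E ψ).
Local Notation aW := (vact M M' E φ).
Local Notation wv := (ω ▷ emv E).

Lemma vtransp_iota_cell : vtransp M E ((ω ▷ t) ∗ ψ ∗ etaw M' V) = wv ∗ act_idem aV.
Proof.
  rewrite vtransp_natural, vtransp_vcomp, vtransp_vact, etaw_whr. unfold act_idem.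
  cells_norm. reflexivity.
Qed.

Lemma vtransp_pi_cell : vtransp M E (φ ∗ etaw M' W ∗ ω) = act_idem aW ∗ wv.
Proof.
  rewrite (vcompA φ), vtransp_vcomp, vtransp_vcomp, vtransp_vact, etaw_whr.
  unfold act_idem. cells_norm. reflexivity.
Qed.

Lemma vtransp_whr_psi :
  vtransp M E ((ω ▷ t) ∗ ψ)
  = (wv ∗ aV) ∗ eqcell (eq_sym (assoc1 t' V (emv E))).
Proof. rewrite vtransp_natural, vtransp_vact. cells_norm. reflexivity. Qed.

Lemma vtransp_phi_whl :
  vtransp M E (φ ∗ (t' ◁ ω))
  = (aW ∗ (t' ◁ wv)) ∗ eqcell (eq_sym (assoc1 t' V (emv E))).
Proof. rewrite vtransp_vcomp, vtransp_vact, whl_whr. cells_norm. cells_congr. Qed.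

Lemma cond_iota_transp :
  (ω ▷ t) ∗ ψ = Wmu M W ∗ phit φ ∗ (t' ◁ (ω ▷ t)) ∗ (t' ◁ ψ) ∗ (t' ◁ etaw M' V)
  <-> wv ∗ aV = aW ∗ (t' ◁ (wv ∗ act_idem aV)).
Proof.
  rewrite <- !whl_vcomp. split; intro H.
  - apply (f_equal (vtransp M E)) in H.
    rewrite vtransp_whr_psi, vtransp_kleisli_act, vtransp_iota_cell, !vcompA in H.
    apply vcomp_eqcell_cancel in H. exact H.
  - apply (vtransp_inj M E).
    rewrite vtransp_whr_psi, vtransp_kleisli_act, vtransp_iota_cell, (vcompA aW), H.
    reflexivity.
Qed.

Lemma cond_pi_transp :
  φ ∗ (t' ◁ ω) = Wmu M W ∗ phit φ ∗ etaw M' (W ⊙ t) ∗ (ω ▷ t) ∗ ψ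
  <-> aW ∗ (t' ◁ wv) = act_idem aW ∗ wv ∗ aV.
Proof.
  split; intro H.
  - apply (f_equal (vtransp M E)) in H.
    rewrite vtransp_phi_whl, vtransp_kleisli_unit, vtransp_whr_psi, !vcompA in H.
    apply vcomp_eqcell_cancel in H. rewrite <- !vcompA in H. exact H.
  - apply (vtransp_inj M E).
    rewrite vtransp_phi_whl, vtransp_kleisli_unit, vtransp_whr_psi, H, <- !vcompA.
    reflexivity.
Qed.

Lemma cond_transp :
  φ ∗ (t' ◁ ω) = (ω ▷ t) ∗ ψ <-> aW ∗ (t' ◁ wv) = wv ∗ aV.
Proof.
  split; intro H.
  - apply (f_equal (vtransp M E)) in H. rewrite vtransp_phi_whl, vtransp_whr_psi in H.
    apply vcomp_eqcell_cancel in H. exact H.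
  - apply (vtransp_inj M E). rewrite vtransp_phi_whl, vtransp_whr_psi, H. reflexivity.
Qed.

Lemma EMw2_iota_cell_iff (Hψ : EMw1 M M' ψ) :
  EMw2 M M' ψ φ ((ω ▷ t) ∗ ψ ∗ etaw M' V)
  <-> wv ∗ aV = aW ∗ (t' ◁ (wv ∗ act_idem aV)).
Proof.
  unfold EMw2. split.
  - intros [H _]. apply (f_equal (vtransp M E)) in H.
    rewrite vtransp_kleisli, vtransp_kleisli_act, vtransp_iota_cell, vtransp_vact,
      <- !vcompA, !vcompA in H.
    apply vcomp_eqcell_cancel in H.
    rewrite <- !vcompA, (act_idem_vact M M' E ψ Hψ) in H. exact H.
  - intro H. split.
    + apply (vtransp_inj M E).
      rewrite vtransp_kleisli, vtransp_kleisli_act, vtransp_iota_cell, vtransp_vact,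
        <- !vcompA, (vcompA (act_idem aV)), (act_idem_vact M M' E ψ Hψ), (vcompA wv aV), H.
      cells_norm. reflexivity.
    + apply (vtransp_inj M E). rewrite vtransp_kleisli_unit, vtransp_iota_cell.
      symmetry. exact (act_mor_iota_idem H).
Qed.

Lemma EMw2_pi_cell_iff (Hφ : EMw1 M M' φ) :
  EMw2 M M' ψ φ (φ ∗ etaw M' W ∗ ω) <-> aW ∗ (t' ◁ wv) = act_idem aW ∗ wv ∗ aV.
Proof.
  unfold EMw2. split.
  - intros [H _]. apply (f_equal (vtransp M E)) in H.
    rewrite vtransp_kleisli, vtransp_kleisli_act, vtransp_pi_cell, vtransp_vact,
      <- !vcompA, !vcompA in H.
    apply vcomp_eqcell_cancel in H.
    rewrite <- !vcompA, whl_vcomp, (vcompA aW), (vact_whl_idem M M' E φ Hφ) in H.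
    symmetry. exact H.
  - intro H. split.
    + apply (vtransp_inj M E).
      rewrite vtransp_kleisli, vtransp_kleisli_act, vtransp_pi_cell, vtransp_vact,
        whl_vcomp, <- !vcompA, (vcompA aW (t' ◁ act_idem aW)),
        (vact_whl_idem M M' E φ Hφ), (vcompA aW), H.
      cells_norm. reflexivity.
    + apply (vtransp_inj M E).
      rewrite vtransp_kleisli_unit, vtransp_pi_cell, vcompA, (vact_idem_idem M M' E φ Hφ).
      reflexivity.
Qed.

Lemma pi_cell_eq_iota_cell :
  φ ∗ (t' ◁ ω) = (ω ▷ t) ∗ ψ -> φ ∗ etaw M' W ∗ ω = (ω ▷ t) ∗ ψ ∗ etaw M' V.
Proof. intro H. rewrite (etaw_natural M' ω), vcompA, H, <- vcompA. reflexivity. Qed.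

End Transport.

Section JwSplitAction.
Context {K : TwoCat} {k k' : K} {M : Monad k} {M' : Monad k'}
  (E : EMObject M) (E' : EMObject M') {V : Hom k k'}
  {ψ : Cell (mt M' ⊙ V) (V ⊙ mt M)} (Hψ : EMw1 M M' ψ)
  {Vb : Hom (emJ E) (emJ E')} {π : Cell (V ⊙ emv E) (emv E' ⊙ Vb)}
  {ι : Cell (emv E' ⊙ Vb) (V ⊙ emv E)} (HV : IsJw E E' ψ Vb π ι).

Lemma Jw_split : ι ∗ π = act_idem (vact M M' E ψ).
Proof.
  destruct HV as [H _]. rewrite H. unfold act_idem, vact. rewrite <- !vcompA.
  reflexivity.
Qed.

Definition Jw_split_action : split_action M' (V ⊙ emv E) (emv E' ⊙ Vb) := {|
  sa_act := vact M M' E ψ;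
  sa_iota := ι;
  sa_pi := π;
  sa_act_idem := vact_whl_idem M M' E ψ Hψ;
  sa_idem_act := act_idem_vact M M' E ψ Hψ;
  sa_split := Jw_split;
  sa_retract := proj1 (proj2 HV)
|}.

Lemma canon_str_Jw : canon_str E' Vb = sa_alg Jw_split_action.
Proof.
  destruct HV as [_ [_ H]]. rewrite H. unfold sa_alg. simpl. unfold vact.
  rewrite <- !vcompA. reflexivity.
Qed.

End JwSplitAction.

Section WeakLiftings.
Context {K : TwoCat} {k k' J J' : K} {v : Hom J k} {v' : Hom J' k'}
  {V W : Hom k k'} {Vb Wb : Hom J J'}
  (ιV : Cell (v' ⊙ Vb) (V ⊙ v)) (πV : Cell (V ⊙ v) (v' ⊙ Vb))
  (ιW : Cell (v' ⊙ Wb) (W ⊙ v)) (πW : Cell (W ⊙ v) (v' ⊙ Wb)) (ω : Cell V W).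

Lemma weak_iota_lifting_whl (HW : πW ∗ ιW = id2 _) (X : Cell Vb Wb) :
  weak_iota_lifting ιV ιW ω X -> v' ◁ X = πW ∗ (ω ▷ v) ∗ ιV.
Proof. intro HX. rewrite <- HX, vcompA, HW, vcomp_idl. reflexivity. Qed.

Lemma weak_pi_lifting_whl (HV : πV ∗ ιV = id2 _) (X : Cell Vb Wb) :
  weak_pi_lifting πV πW ω X -> v' ◁ X = πW ∗ (ω ▷ v) ∗ ιV.
Proof. intro HX. rewrite vcompA, <- HX, <- vcompA, HV, vcomp_idr. reflexivity. Qed.

End WeakLiftings.

Section EMLiftings.
Context {K : TwoCat} {k' : K} {M' : Monad k'} (E' : EMObject M').

Lemma emv_whl_inj {l : K} {X Y : Hom l (emJ E')} (α β : Cell X Y) :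
  emv E' ◁ α = emv E' ◁ β -> α = β.
Proof.
  intro H. destruct (em_mor (em_mor_func α)) as [γ [_ Hγ]].
  rewrite <- (Hγ α eq_refl), <- (Hγ β (eq_sym H)). reflexivity.
Qed.

Context {k J : K} {v : Hom J k} {V W : Hom k k'} {Vb Wb : Hom J (emJ E')}
  (ιV : Cell (emv E' ⊙ Vb) (V ⊙ v)) (πV : Cell (V ⊙ v) (emv E' ⊙ Vb))
  (ιW : Cell (emv E' ⊙ Wb) (W ⊙ v)) (πW : Cell (W ⊙ v) (emv E' ⊙ Wb)) (ω : Cell V W).

Local Notation ρ := (πW ∗ (ω ▷ v) ∗ ιV).

Lemma ex_weak_iota_lifting_iff (HW : πW ∗ ιW = id2 _) :
  (exists X : Cell Vb Wb, weak_iota_lifting ιV ιW ω X)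
  <-> is_alg_mor M' (canon_str E' Vb) (canon_str E' Wb) ρ /\ ιW ∗ ρ = (ω ▷ v) ∗ ιV.
Proof.
  split.
  - intros [X HX]. rewrite <- (weak_iota_lifting_whl ιV ιW πW ω HW X HX).
    split; [apply em_mor_func | exact HX].
  - intros [Hmor Hι]. destruct (em_mor Hmor) as [X [HX _]].
    exists X. unfold weak_iota_lifting. rewrite HX. exact Hι.
Qed.

Lemma ex_weak_pi_lifting_iff (HV : πV ∗ ιV = id2 _) :
  (exists X : Cell Vb Wb, weak_pi_lifting πV πW ω X)
  <-> is_alg_mor M' (canon_str E' Vb) (canon_str E' Wb) ρ /\ ρ ∗ πV = πW ∗ (ω ▷ v).
Proof.
  split.
  - intros [X HX]. rewrite <- (weak_pi_lifting_whl ιV πV πW ω HV X HX).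
    split; [apply em_mor_func | exact HX].
  - intros [Hmor Hπ]. destruct (em_mor Hmor) as [X [HX _]].
    exists X. unfold weak_pi_lifting. rewrite HX. exact Hπ.
Qed.

End EMLiftings.

Section Proposition43.
Context {K : TwoCat} {k k' : K} {M : Monad k} {M' : Monad k'}
  (E : EMObject M) (E' : EMObject M') {V W : Hom k k'}
  {ψ : Cell (mt M' ⊙ V) (V ⊙ mt M)} {φ : Cell (mt M' ⊙ W) (W ⊙ mt M)}
  (Hψ : EMw1 M M' ψ) (Hφ : EMw1 M M' φ)
  {Vb : Hom (emJ E) (emJ E')} {πV : Cell (V ⊙ emv E) (emv E' ⊙ Vb)}
  {ιV : Cell (emv E' ⊙ Vb) (V ⊙ emv E)} (HV : IsJw E E' ψ Vb πV ιV)
  {Wb : Hom (emJ E) (emJ E')} {πW : Cell (W ⊙ emv E) (emv E' ⊙ Wb)}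
  {ιW : Cell (emv E' ⊙ Wb) (W ⊙ emv E)} (HW : IsJw E E' φ Wb πW ιW)
  (ω : Cell V W).

Local Notation t := (mt M).
Local Notation t' := (mt M').
Local Notation v := (emv E).
Local Notation v' := (emv E').
Local Notation SV := (Jw_split_action E E' Hψ HV).
Local Notation SW := (Jw_split_action E E' Hφ HW).
Local Notation ρL := (πW ∗ (ω ▷ v) ∗ ιV).
Local Notation algmor := (is_alg_mor M' (canon_str E' Vb) (canon_str E' Wb) ρL).
Local Notation ρ1 := ((ω ▷ t) ∗ ψ ∗ etaw M' V).
Local Notation ρ2 := (φ ∗ etaw M' W ∗ ω).
Local Notation cond1 :=
  ((ω ▷ t) ∗ ψ = Wmu M W ∗ phit φ ∗ (t' ◁ (ω ▷ t)) ∗ (t' ◁ ψ) ∗ (t' ◁ etaw M' V)).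
Local Notation cond2 :=
  (φ ∗ (t' ◁ ω) = Wmu M W ∗ phit φ ∗ etaw M' (W ⊙ t) ∗ (ω ▷ t) ∗ ψ).
Local Notation cond3 := (φ ∗ (t' ◁ ω) = (ω ▷ t) ∗ ψ).

Lemma cond1_iff_split : cond1 <-> algmor /\ ιW ∗ ρL = (ω ▷ v) ∗ ιV.
Proof.
  rewrite (cond_iota_transp E ψ φ ω), (canon_str_Jw E E' Hψ HV), (canon_str_Jw E E' Hφ HW).
  exact (act_mor_iota_iff SV SW (ω ▷ v)).
Qed.

Lemma cond2_iff_split : cond2 <-> algmor /\ ρL ∗ πV = πW ∗ (ω ▷ v).
Proof.
  rewrite (cond_pi_transp E ψ φ ω), (canon_str_Jw E E' Hψ HV), (canon_str_Jw E E' Hφ HW).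
  exact (act_mor_pi_iff SV SW (ω ▷ v)).
Qed.

Lemma cond3_iff_split : cond3 <-> algmor /\ ιW ∗ πW ∗ (ω ▷ v) = (ω ▷ v) ∗ ιV ∗ πV.
Proof.
  rewrite (cond_transp E ψ φ ω), (canon_str_Jw E E' Hψ HV), (canon_str_Jw E E' Hφ HW).
  exact (act_mor_iff SV SW (ω ▷ v)).
Qed.

Lemma cond3_iff_cond1_cond2 : cond3 <-> cond1 /\ cond2.
Proof.
  rewrite (cond_transp E ψ φ ω), (cond_iota_transp E ψ φ ω), (cond_pi_transp E ψ φ ω).
  exact (act_mor_iff_iota_pi SV SW (ω ▷ v)).
Qed.

Lemma Jw2_vtransp (ρ : Cell V (W ⊙ t)) :
  Jw2 E E' πW ιV ρ = πW ∗ vtransp M E ρ ∗ ιV.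
Proof. unfold Jw2, vtransp. rewrite (vcompA (vcounit E W)). reflexivity. Qed.

Lemma Jw2_iota_cell : Jw2 E E' πW ιV ρ1 = ρL.
Proof.
  rewrite Jw2_vtransp, (vtransp_iota_cell E ψ ω), <- vcompA.
  exact (f_equal (fun x => πW ∗ (ω ▷ v) ∗ x) (sa_idem_iota SV)).
Qed.

Lemma Jw2_pi_cell : Jw2 E E' πW ιV ρ2 = ρL.
Proof.
  rewrite Jw2_vtransp, (vtransp_pi_cell E φ ω), <- vcompA, vcompA.
  exact (f_equal (fun x => x ∗ (ω ▷ v) ∗ ιV) (sa_pi_idem SW)).
Qed.

Lemma prop43_iota_part :
  (cond1 <-> EMw2 M M' ψ φ ρ1)
  /\ (cond1 <-> (algmor /\ ιW ∗ ρL = (ω ▷ v) ∗ ιV))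
  /\ (cond1 <-> exists X : Cell Vb Wb, weak_iota_lifting ιV ιW ω X)
  /\ (cond1 ->
      (exists X : Cell Vb Wb, v' ◁ X = Jw2 E E' πW ιV ρ1)
      /\ forall X : Cell Vb Wb, v' ◁ X = Jw2 E E' πW ιV ρ1 ->
           v' ◁ X = ρL /\ weak_iota_lifting ιV ιW ω X).
Proof.
  pose proof (ex_weak_iota_lifting_iff E' ιV ιW πW ω (sa_retract SW)) as Hlift.
  rewrite Jw2_iota_cell. split; [| split; [| split]].
  - rewrite (cond_iota_transp E ψ φ ω), (EMw2_iota_cell_iff E ψ φ ω Hψ). reflexivity.
  - exact cond1_iff_split.
  - rewrite cond1_iff_split, Hlift. reflexivity.
  - intro Hc. apply cond1_iff_split in Hc. split.
    + destruct (proj2 Hlift Hc) as [X HX].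
      exists X. exact (weak_iota_lifting_whl ιV ιW πW ω (sa_retract SW) X HX).
    + intros X HX. split; [exact HX |].
      unfold weak_iota_lifting. rewrite HX. exact (proj2 Hc).
Qed.

Lemma prop43_pi_part :
  (cond2 <-> EMw2 M M' ψ φ ρ2)
  /\ (cond2 <-> (algmor /\ ρL ∗ πV = πW ∗ (ω ▷ v)))
  /\ (cond2 <-> exists X : Cell Vb Wb, weak_pi_lifting πV πW ω X)
  /\ (cond2 ->
      (exists X : Cell Vb Wb, v' ◁ X = Jw2 E E' πW ιV ρ2)
      /\ forall X : Cell Vb Wb, v' ◁ X = Jw2 E E' πW ιV ρ2 ->
           v' ◁ X = ρL /\ weak_pi_lifting πV πW ω X).
Proof.
  pose proof (ex_weak_pi_lifting_iff E' ιV πV πW ω (sa_retract SV)) as Hlift.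
  rewrite Jw2_pi_cell. split; [| split; [| split]].
  - rewrite (cond_pi_transp E ψ φ ω), (EMw2_pi_cell_iff E ψ φ ω Hφ). reflexivity.
  - exact cond2_iff_split.
  - rewrite cond2_iff_split, Hlift. reflexivity.
  - intro Hc. apply cond2_iff_split in Hc. split.
    + destruct (proj2 Hlift Hc) as [X HX].
      exists X. exact (weak_pi_lifting_whl ιV πV πW ω (sa_retract SV) X HX).
    + intros X HX. split; [exact HX |].
      unfold weak_pi_lifting. rewrite HX. exact (proj2 Hc).
Qed.

Lemma prop43_part :
  (cond3 <-> (EMw2 M M' ψ φ ρ2 /\ EMw2 M M' ψ φ ρ1))
  /\ (cond3 <-> (algmor /\ ιW ∗ πW ∗ (ω ▷ v) = (ω ▷ v) ∗ ιV ∗ πV))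
  /\ (cond3 <-> ((exists X : Cell Vb Wb, weak_iota_lifting ιV ιW ω X)
                 /\ (exists Y : Cell Vb Wb, weak_pi_lifting πV πW ω Y)))
  /\ (cond3 -> ρ2 = ρ1
               /\ forall X Y : Cell Vb Wb, weak_iota_lifting ιV ιW ω X ->
                    weak_pi_lifting πV πW ω Y -> X = Y).
Proof.
  destruct prop43_iota_part as [EMw2_1 [_ [lift1 _]]].
  destruct prop43_pi_part as [EMw2_2 [_ [lift2 _]]].
  rewrite cond3_iff_cond1_cond2, <- EMw2_1, <- EMw2_2, <- lift1, <- lift2.
  split; [tauto | split; [| split; [tauto |]]].
  - rewrite <- cond3_iff_cond1_cond2. exact cond3_iff_split.
  - intros [H1 H2]. split.
    + apply pi_cell_eq_iota_cell. apply cond3_iff_cond1_cond2. tauto.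
    + intros X Y HX HY. apply (emv_whl_inj E').
      rewrite (weak_iota_lifting_whl ιV ιW πW ω (sa_retract SW) X HX),
        (weak_pi_lifting_whl ιV πV πW ω (sa_retract SV) Y HY).
      reflexivity.
Qed.

End Proposition43.

Theorem proposition4p3 (K : TwoCat)
  (EM : forall (k : K) (M : Monad k), EMObject M)
  (Hsplit : idem_split K)
  (k k' : K) (M : Monad k) (M' : Monad k')
  (V W : Hom k k')
  (ψ : Cell (mt M' ⊙ V) (V ⊙ mt M)) (φ : Cell (mt M' ⊙ W) (W ⊙ mt M))
  (Hψ : EMw1 M M' ψ) (Hφ : EMw1 M M' φ)
  (Vb : Hom (emJ (EM k M)) (emJ (EM k' M')))
  (πV : Cell (V ⊙ emv (EM k M)) (emv (EM k' M') ⊙ Vb))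
  (ιV : Cell (emv (EM k' M') ⊙ Vb) (V ⊙ emv (EM k M)))
  (HV : IsJw (EM k M) (EM k' M') ψ Vb πV ιV)
  (Wb : Hom (emJ (EM k M)) (emJ (EM k' M')))
  (πW : Cell (W ⊙ emv (EM k M)) (emv (EM k' M') ⊙ Wb))
  (ιW : Cell (emv (EM k' M') ⊙ Wb) (W ⊙ emv (EM k M)))
  (HW : IsJw (EM k M) (EM k' M') φ Wb πW ιW)
  (ω : Cell V W) :
  let t := mt M in
  let t' := mt M' in
  let v := emv (EM k M) in
  let v' := emv (EM k' M') in
  let ρL := πW ∗ (ω ▷ v) ∗ ιV in
  let algmor := is_alg_mor M' (canon_str (EM k' M') Vb) (canon_str (EM k' M') Wb) ρL in
  let ρ1 := (ω ▷ t) ∗ ψ ∗ etaw M' V in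
  let ρ2 := φ ∗ etaw M' W ∗ ω in
  (let c1 := (ω ▷ t) ∗ ψ = Wmu M W ∗ phit φ ∗ (t' ◁ (ω ▷ t)) ∗ (t' ◁ ψ)
                            ∗ (t' ◁ etaw M' V) in
   (c1 <-> EMw2 M M' ψ φ ρ1)
   /\ (c1 <-> (algmor /\ ιW ∗ ρL = (ω ▷ v) ∗ ιV))
   /\ (c1 <-> exists X : Cell Vb Wb, weak_iota_lifting ιV ιW ω X)
   /\ (c1 ->
       (exists X : Cell Vb Wb, v' ◁ X = Jw2 (EM k M) (EM k' M') πW ιV ρ1)
       /\ forall X : Cell Vb Wb, v' ◁ X = Jw2 (EM k M) (EM k' M') πW ιV ρ1 ->
            v' ◁ X = ρL /\ weak_iota_lifting ιV ιW ω X))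
  /\
  (let c2 := φ ∗ (t' ◁ ω) = Wmu M W ∗ phit φ ∗ etaw M' (W ⊙ t) ∗ (ω ▷ t) ∗ ψ in
   (c2 <-> EMw2 M M' ψ φ ρ2)
   /\ (c2 <-> (algmor /\ ρL ∗ πV = πW ∗ (ω ▷ v)))
   /\ (c2 <-> exists X : Cell Vb Wb, weak_pi_lifting πV πW ω X)
   /\ (c2 ->
       (exists X : Cell Vb Wb, v' ◁ X = Jw2 (EM k M) (EM k' M') πW ιV ρ2)
       /\ forall X : Cell Vb Wb, v' ◁ X = Jw2 (EM k M) (EM k' M') πW ιV ρ2 ->
            v' ◁ X = ρL /\ weak_pi_lifting πV πW ω X))
  /\
  (let c3 := φ ∗ (t' ◁ ω) = (ω ▷ t) ∗ ψ in
   (c3 <-> (EMw2 M M' ψ φ ρ2 /\ EMw2 M M' ψ φ ρ1))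
   /\ (c3 <-> (algmor /\ ιW ∗ πW ∗ (ω ▷ v) = (ω ▷ v) ∗ ιV ∗ πV))
   /\ (c3 <-> ((exists X : Cell Vb Wb, weak_iota_lifting ιV ιW ω X)
               /\ (exists Y : Cell Vb Wb, weak_pi_lifting πV πW ω Y)))
   /\ (c3 -> ρ2 = ρ1
             /\ forall X Y : Cell Vb Wb, weak_iota_lifting ιV ιW ω X ->
                  weak_pi_lifting πV πW ω Y -> X = Y)).
Proof.
  cbv zeta. split; [| split].
  - exact (prop43_iota_part _ _ Hψ Hφ HV HW ω).
  - exact (prop43_pi_part _ _ Hψ Hφ HV HW ω).
  - exact (prop43_part _ _ Hψ Hφ HV HW ω).
Qed.
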